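(* Let $\mu$ be a finite Borel measure on $[0,1]$ such that for every $0<s<1$, $$|\widehat{\mu}(0)|^2+\sum_{u\in\mathbb{Z}\setminus\{0\}}|\widehat{\mu}(u)|^2|u|^{s-1}<\infty.$$ Let $U\ge1$ be an integer and $T(\xi)=\sum_{|u|\le U}c_ue(-\xi u)$ with $c_u\in\mathbb{C}$. Then for every $\rho\in(0,1)$, $$\Big|\int_0^1T(\xi)\,d\mu(\xi)\Big|\ll_{\rho,\mu}U^\rho\|T\|_{L^2([0,1])}.$$
   Context: $e(x)=e^{2\pi i x}$ and $\widehat{\mu}(\xi)=\int_0^1e(-\xi\alpha)\,d\mu(\alpha)$. The implied constant depends only on $\rho$ and $\mu$. *)

From HB Require Import structures.
From mathcomp Require Import all_boot all_order all_algebra.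
From mathcomp Require Import all_classical all_reals all_analysis.
Set Implicit Arguments. Unset Strict Implicit. Unset Printing Implicit Defensive.
Import Order.TTheory GRing.Theory Num.Theory.
Import numFieldNormedType.Exports.
Local Open Scope classical_set_scope.
Local Open Scope ring_scope.

Section Defs.
Variable R : realType.

(* e(x) = exp(2 pi i x) = cos(2 pi x) + i sin(2 pi x); complex numbers are
   represented by their real and imaginary parts. *)

(* Fourier coefficient  mu^(xi) = \int_0^1 e(-xi a) d mu(a):
   real part \int cos(2 pi xi a), imaginary part - \int sin(2 pi xi a). *)
Definition muhat_re (mu : {measure set R -> \bar R}) (xi : R) : R :=
  Rintegral mu `[0, 1] (fun a => cos (2 * pi * xi * a)).
Definition muhat_im (mu : {measure set R -> \bar R}) (xi : R) : R :=
  - Rintegral mu `[0, 1] (fun a => sin (2 * pi * xi * a)).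
Definition muhat_abs2 (mu : {measure set R -> \bar R}) (xi : R) : R :=
  muhat_re mu xi ^+ 2 + muhat_im mu xi ^+ 2.

(* T(xi) = \sum_{|u| <= U} c_u e(-xi u), with c_u = cre u + i cim u.
   The index k : 'I_(2U+1) corresponds to u = k - U. *)
Definition trig_re (U : nat) (cre cim : int -> R) (xi : R) : R :=
  \sum_(k < (2 * U).+1)
    let u := (k%:Z - U%:Z)%R in
    (cre u * cos (2 * pi * xi * u%:~R) + cim u * sin (2 * pi * xi * u%:~R)).
Definition trig_im (U : nat) (cre cim : int -> R) (xi : R) : R :=
  \sum_(k < (2 * U).+1)
    let u := (k%:Z - U%:Z)%R in
    (cim u * cos (2 * pi * xi * u%:~R) - cre u * sin (2 * pi * xi * u%:~R)).

Definition trig_int_abs (mu : {measure set R -> \bar R}) (U : nat)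
  (cre cim : int -> R) : R :=
  Num.sqrt (Rintegral mu `[0, 1] (trig_re U cre cim) ^+ 2
          + Rintegral mu `[0, 1] (trig_im U cre cim) ^+ 2).

Definition trig_L2norm (U : nat) (cre cim : int -> R) : R :=
  Num.sqrt (Rintegral (@lebesgue_measure R) `[0, 1]
     (fun x => trig_re U cre cim x ^+ 2 + trig_im U cre cim x ^+ 2)).

End Defs.

From HB Require Import structures.
From mathcomp Require Import all_boot all_order all_algebra.
From mathcomp Require Import all_classical all_reals all_analysis.
From mathcomp Require Import ring lra zify measurable_realfun.
Import Order.TTheory GRing.Theory Num.Theory.
Import numFieldNormedType.Exports.
Local Open Scope classical_set_scope.
Local Open Scope ring_scope.

(* Orthogonality of the characters [e(u x)] on [0, 1] gives Parseval,
   [||T||^2 = sum_u |c_u|^2], and [int T dmu = sum_u c_u muhat(u)].  By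
   Cauchy-Schwarz, [|int T dmu|^2 <= ||T||^2 sum_(|u| <= U) |muhat(u)|^2], and
   since [|u|^(-rho) >= U^(-rho)] for [1 <= |u| <= U], the last sum is at most
   [U^rho (|muhat(0)|^2 + sum_(u <> 0) |muhat(u)|^2 |u|^(-rho))], which is finite
   by the hypothesis at [s = 1 - rho]. *)

Section TrigIntegrals.
Variable R : realType.
Implicit Types (a b c x : R) (m : int).

Lemma derivable_continuous {F f : R -> R} :
  (forall x, is_derive x 1 F (f x)) -> continuous F.
Proof.
move=> dF x; apply: differentiable_continuous; rewrite -derivable1_diffP.
exact: (@ex_derive _ _ _ _ _ _ _ (dF x)).
Qed.

Lemma Rintegral01_FTC {f F : R -> R} : continuous f ->
  (forall x, is_derive x 1 F (f x)) ->
  Rintegral (@lebesgue_measure R) `[0, 1] f = F 1 - F 0.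
Proof.
move=> cf dF.
have dv x : derivable F x 1 := @ex_derive _ _ _ _ _ _ _ (dF x).
have cF := derivable_continuous dF.
rewrite /Rintegral (@continuous_FTC2 _ f F) //=.
- by apply: continuous_subspaceT => x; exact: cf.
- split; [by move=> x _ | exact/cvg_at_right_filter/cF
                        | exact/cvg_at_left_filter/cF].
- by move=> x _; rewrite derive1E derive_val.
Qed.

Lemma is_derive_sin_scale c x :
  is_derive x 1 (fun y => sin (c * y)) (cos (c * x) * c).
Proof.
apply: is_derive1_comp; have := is_deriveZ c (is_derive_id x 1).
by rewrite [_ *: 1]mulr1.
Qed.

Lemma is_derive_cos_scale c x :
  is_derive x 1 (fun y => cos (c * y)) (- sin (c * x) * c).
Proof.
apply: is_derive1_comp; have := is_deriveZ c (is_derive_id x 1).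
by rewrite [_ *: 1]mulr1.
Qed.

Lemma continuous_sin_scale c : continuous (fun y => sin (c * y)).
Proof. exact: derivable_continuous (is_derive_sin_scale c). Qed.

Lemma continuous_cos_scale c : continuous (fun y => cos (c * y)).
Proof. exact: derivable_continuous (is_derive_cos_scale c). Qed.

Lemma two_pi_natE (n : nat) : 2 * pi * n%:R = 0 + pi *+ 2 *+ n :> R.
Proof. by rewrite add0r -[pi *+ 2 *+ n]mulr_natr -[pi *+ 2]mulr_natr; ring. Qed.

Lemma sin_2pi_int m : sin (2 * pi * m%:~R) = 0 :> R.
Proof.
have sin_nat (n : nat) : sin (2 * pi * n%:R) = 0 :> R.
  by rewrite two_pi_natE (periodicn (@sinD2pi R)) sin0.
case: m => n; first by rewrite -pmulrn sin_nat.
by rewrite NegzE intrN mulrN sinN -pmulrn sin_nat oppr0.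
Qed.

Lemma cos_2pi_int m : cos (2 * pi * m%:~R) = 1 :> R.
Proof.
have cos_nat (n : nat) : cos (2 * pi * n%:R) = 1 :> R.
  by rewrite two_pi_natE (periodicn (@cosD2pi R)) cos0.
case: m => n; first by rewrite -pmulrn cos_nat.
by rewrite NegzE intrN mulrN cosN -pmulrn cos_nat.
Qed.

Lemma lebesgue_measure_itv01 : (@lebesgue_measure R) `[0%R, 1%R] = 1%E.
Proof. by rewrite lebesgue_measure_itv /= lte_fin ltr01 oppr0 adde0. Qed.

Lemma Rintegral01_cst c :
  Rintegral (@lebesgue_measure R) `[0, 1] (fun=> c) = c.
Proof.
rewrite Rintegral_cst // (_ : fine _ = 1) ?mulr1 //.
exact: (congr1 fine lebesgue_measure_itv01).
Qed.

Lemma continuous_Mcos a c : continuous (fun x => a * cos (c * x)).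
Proof.
by move=> x; apply: continuousM; [exact: cst_continuous | exact: continuous_cos_scale].
Qed.

Lemma continuous_Msin a c : continuous (fun x => a * sin (c * x)).
Proof.
by move=> x; apply: continuousM; [exact: cst_continuous | exact: continuous_sin_scale].
Qed.

Lemma continuous_cos_sin a b c (c' : R) :
  continuous (fun x => a * cos (c * x) + b * sin (c' * x)).
Proof.
move=> x; apply: (@continuousD _ _ _ (fun y => a * cos (c * y))).
  exact: continuous_Mcos.
exact: continuous_Msin.
Qed.

Lemma lebesgue_integrable01 (f : R -> R) : continuous f ->
  (@lebesgue_measure R).-integrable `[0, 1] (EFin \o f).
Proof.
move=> cf; apply: continuous_compact_integrable; first exact: segment_compact.
by apply: continuous_subspaceT => x; exact: cf.
Qed.

Lemma Rintegral01_cos_sin a b c (c' : R) :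
  Rintegral (@lebesgue_measure R) `[0, 1]
    (fun x => a * cos (c * x) + b * sin (c' * x)) =
  a * Rintegral (@lebesgue_measure R) `[0, 1] (fun x => cos (c * x)) +
  b * Rintegral (@lebesgue_measure R) `[0, 1] (fun x => sin (c' * x)).
Proof.
rewrite RintegralD ?RintegralZl //; apply: lebesgue_integrable01;
  first [exact: continuous_cos_scale | exact: continuous_sin_scale
        | exact: continuous_Mcos | exact: continuous_Msin].
Qed.

Lemma Rintegral01_cos_scale c : c != 0 ->
  Rintegral (@lebesgue_measure R) `[0, 1] (fun x => cos (c * x)) = sin c / c.
Proof.
move=> c0.
have dF x : is_derive x 1 (fun y => c^-1 * sin (c * y)) (cos (c * x)).
  have := is_deriveZ c^-1 (is_derive_sin_scale c x).
  by rewrite [_ *: _]mulrCA mulVf // mulr1.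
rewrite (Rintegral01_FTC (continuous_cos_scale c) dF).
by rewrite mulr0 sin0 mulr0 subr0 mulr1 mulrC.
Qed.

Lemma Rintegral01_sin_scale c : c != 0 ->
  Rintegral (@lebesgue_measure R) `[0, 1] (fun x => sin (c * x)) = (1 - cos c) / c.
Proof.
move=> c0.
have dF x : is_derive x 1 (fun y => - c^-1 * cos (c * y)) (sin (c * x)).
  have := is_deriveZ (- c^-1) (is_derive_cos_scale c x).
  by rewrite [_ *: _]mulNr mulNr mulrN opprK mulrCA mulVf // mulr1.
rewrite (Rintegral01_FTC (continuous_sin_scale c) dF).
by rewrite mulr0 cos0 mulr1; field.
Qed.

Lemma two_pi_int_neq0 m : m != 0 -> 2 * pi * m%:~R != 0 :> R.
Proof. by move=> m0; rewrite !mulf_neq0 ?intr_eq0 ?pnatr_eq0 ?(gt_eqF (pi_gt0 _)). Qed.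

Lemma Rintegral01_cos_2pi_int m :
  Rintegral (@lebesgue_measure R) `[0, 1] (fun x => cos (2 * pi * m%:~R * x))
  = (m == 0)%:R.
Proof.
have [->|m0] := eqVneq m 0.
  under eq_Rintegral do rewrite mulr0 mul0r cos0.
  by rewrite Rintegral01_cst.
by rewrite Rintegral01_cos_scale ?two_pi_int_neq0 // sin_2pi_int mul0r.
Qed.

Lemma Rintegral01_sin_2pi_int m :
  Rintegral (@lebesgue_measure R) `[0, 1] (fun x => sin (2 * pi * m%:~R * x)) = 0.
Proof.
have [->|m0] := eqVneq m 0.
  under eq_Rintegral do rewrite mulr0 mul0r sin0.
  by rewrite Rintegral01_cst.
by rewrite Rintegral01_sin_scale ?two_pi_int_neq0 // cos_2pi_int subrr mul0r.
Qed.

End TrigIntegrals.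

Section RintegralSum.
Variables (d : measure_display) (T : measurableType d) (R : realType).
Variables (nu : {measure set T -> \bar R}) (D : set T) (mD : measurable D).
Variables (I : Type) (f : I -> T -> R).
Hypothesis intf : forall i, nu.-integrable D (EFin \o f i).

Lemma integrable_sumr (s : seq I) (P : pred I) :
  nu.-integrable D (EFin \o (fun x => \sum_(i <- s | P i) f i x)).
Proof.
have -> : EFin \o (fun x => \sum_(i <- s | P i) f i x) =
          (fun x => \sum_(i <- s | P i) (f i x)%:E)%E.
  by apply/funext => x /=; rewrite sumEFin.
by apply: integrable_sum => // i _; exact: intf.
Qed.

Lemma Rintegral_sum (s : seq I) (P : pred I) :
  Rintegral nu D (fun x => \sum_(i <- s | P i) f i x) =
  \sum_(i <- s | P i) Rintegral nu D (f i).
Proof.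
elim: s => [|i s' IH].
  under eq_Rintegral do rewrite big_nil.
  by rewrite big_nil Rintegral_cst // mul0r.
rewrite big_cons -IH; under eq_Rintegral do rewrite big_cons.
by case: (P i) => //; rewrite RintegralD // integrable_sumr.
Qed.

End RintegralSum.

Section FiniteMeasureIntegrable.
Variables (R : realType) (nu : {measure set R -> \bar R}) (D : set R).
Hypotheses (mD : measurable D) (nuD : (nu D < +oo)%E).
Implicit Types (a b c : R).

Lemma integrable_bounded_continuous (f : R -> R) (M : R) :
  continuous f -> (forall x, `|f x| <= M) -> nu.-integrable D (EFin \o f).
Proof.
move=> cf fM; apply: measurable_bounded_integrable => //.
  exact: measurable_funS (continuous_measurable_fun cf).
exists M; split; first exact: num_real.
by move=> N MN x _ /=; rewrite (le_trans (fM x)) // ltW.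
Qed.

Lemma integrable_cos_scale c : nu.-integrable D (EFin \o (fun x => cos (c * x))).
Proof.
apply: (integrable_bounded_continuous _ (1)); last by move=> x; exact: cos_max.
exact: continuous_cos_scale.
Qed.

Lemma integrable_sin_scale c : nu.-integrable D (EFin \o (fun x => sin (c * x))).
Proof.
apply: (integrable_bounded_continuous _ (1)); last by move=> x; exact: sin_max.
exact: continuous_sin_scale.
Qed.

Lemma integrable_Mcos a c :
  nu.-integrable D (EFin \o (fun x => a * cos (c * x))).
Proof.
apply: eq_integrable mD _ _ _ (integrableZl mD a (integrable_cos_scale c)).
by move=> x _ /=; rewrite EFinM.
Qed.

Lemma integrable_Msin a c :
  nu.-integrable D (EFin \o (fun x => a * sin (c * x))).
Proof.
apply: eq_integrable mD _ _ _ (integrableZl mD a (integrable_sin_scale c)).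
by move=> x _ /=; rewrite EFinM.
Qed.

Lemma integrable_cos_sin a b c (c' : R) :
  nu.-integrable D (EFin \o (fun x => a * cos (c * x) + b * sin (c' * x))).
Proof.
apply: eq_integrable mD _ _ _
  (integrableD mD (integrable_Mcos a c) (integrable_Msin b c')).
by move=> x _ /=; rewrite EFinD.
Qed.

Lemma Rintegral_cos_sin a b c (c' : R) :
  Rintegral nu D (fun x => a * cos (c * x) + b * sin (c' * x)) =
  a * Rintegral nu D (fun x => cos (c * x)) + b * Rintegral nu D (fun x => sin (c' * x)).
Proof.
rewrite RintegralD ?RintegralZl //; first [exact: integrable_cos_scale
  | exact: integrable_sin_scale | exact: integrable_Mcos | exact: integrable_Msin].
Qed.

End FiniteMeasureIntegrable.

Definition freq (U k : nat) : int := k%:Z - U%:Z.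

Lemma freq_inj U : injective (freq U).
Proof. by move=> k l /addIr []. Qed.

Lemma sum_freq (V : zmodType) (U : nat) (h : int -> V) :
  \sum_(k < (2 * U).+1) h (freq U k) =
  h 0 + \sum_(1 <= n < U.+1) (h n%:Z + h (- n%:Z)).
Proof.
rewrite -(big_mkord xpredT (h \o freq U)) (@big_cat_nat _ _ _ U 0 (2 * U).+1) //=;
  last by lia.
rewrite (big_addn 0 _ U) (_ : ((2 * U).+1 - U = U.+1)%N); last by lia.
rewrite big_nat_recl // big_nat_rev /= big_add1 big_split /=.
have eN : \sum_(0 <= i < U) h (freq U (0 + U - i.+1)) =
          \sum_(0 <= i < U) h (- i.+1%:Z).
  apply: eq_big_nat => i /andP[_ iU].
  by rewrite /freq add0n -subzn // addrAC subrr add0r.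
have eP : \sum_(0 <= i < U) h (freq U (i.+1 + U)) = \sum_(0 <= i < U) h i.+1%:Z.
  by apply: eq_big_nat => i _; rewrite /freq PoszD addrK.
have eZ : freq U (0 + U) = 0 by rewrite /freq add0n subrr.
by rewrite eN eP eZ addrC -addrA.
Qed.

Section TrigPolynomial.
Variables (R : realType) (U : nat) (cre cim : int -> R).

Lemma trig_reE : trig_re U cre cim = fun x => \sum_(k < (2 * U).+1)
  (cre (freq U k) * cos (2 * pi * (freq U k)%:~R * x) +
   cim (freq U k) * sin (2 * pi * (freq U k)%:~R * x)).
Proof.
apply/funext => x; apply: eq_bigr => k _ /=.
by rewrite ![2 * pi * x * _]mulrAC.
Qed.

Lemma trig_imE : trig_im U cre cim = fun x => \sum_(k < (2 * U).+1)
  (cim (freq U k) * cos (2 * pi * (freq U k)%:~R * x) +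
   (- cre (freq U k)) * sin (2 * pi * (freq U k)%:~R * x)).
Proof.
apply/funext => x; apply: eq_bigr => k _ /=.
by rewrite ![2 * pi * x * _]mulrAC mulNr.
Qed.

Lemma Rintegral_trig_re (nu : {measure set R -> \bar R}) :
  (nu `[0%R, 1%R]%classic < +oo)%E ->
  Rintegral nu `[0, 1] (trig_re U cre cim) = \sum_(k < (2 * U).+1)
    (cre (freq U k) * muhat_re nu (freq U k)%:~R -
     cim (freq U k) * muhat_im nu (freq U k)%:~R).
Proof.
move=> nu01; rewrite trig_reE Rintegral_sum // => [|k]; last exact: integrable_cos_sin.
by apply: eq_bigr => k _; rewrite Rintegral_cos_sin // /muhat_im mulrN opprK.
Qed.

Lemma Rintegral_trig_im (nu : {measure set R -> \bar R}) :
  (nu `[0%R, 1%R]%classic < +oo)%E ->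
  Rintegral nu `[0, 1] (trig_im U cre cim) = \sum_(k < (2 * U).+1)
    (cim (freq U k) * muhat_re nu (freq U k)%:~R +
     cre (freq U k) * muhat_im nu (freq U k)%:~R).
Proof.
move=> nu01; rewrite trig_imE Rintegral_sum // => [|k]; last exact: integrable_cos_sin.
by apply: eq_bigr => k _; rewrite Rintegral_cos_sin // /muhat_im mulrN mulNr.
Qed.

Lemma trig_sqr_expand x :
  trig_re U cre cim x ^+ 2 + trig_im U cre cim x ^+ 2 =
  \sum_(k < (2 * U).+1) \sum_(l < (2 * U).+1)
   ((cre (freq U k) * cre (freq U l) + cim (freq U k) * cim (freq U l)) *
       cos (2 * pi * (freq U k - freq U l)%:~R * x)
    + (cre (freq U k) * cim (freq U l) - cim (freq U k) * cre (freq U l)) *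
       sin (2 * pi * (freq U l - freq U k)%:~R * x)).
Proof.
rewrite /trig_re /trig_im !expr2 !big_distrlr /= -big_split /=.
apply: eq_bigr => k _; rewrite -big_split /=; apply: eq_bigr => l _.
rewrite /freq; set a := (k%:Z - U%:Z)%R; set b := (l%:Z - U%:Z)%R.
have -> : 2 * pi * (a - b)%:~R * x = 2 * pi * x * a%:~R - 2 * pi * x * b%:~R.
  by rewrite intrB; ring.
have -> : 2 * pi * (b - a)%:~R * x = 2 * pi * x * b%:~R - 2 * pi * x * a%:~R.
  by rewrite intrB; ring.
rewrite cosB sinB; ring.
Qed.

Lemma trig_parseval :
  Rintegral (@lebesgue_measure R) `[0, 1]
    (fun x => trig_re U cre cim x ^+ 2 + trig_im U cre cim x ^+ 2) =
  \sum_(k < (2 * U).+1) (cre (freq U k) ^+ 2 + cim (freq U k) ^+ 2).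
Proof.
have int_cos_sin a b c c' : (@lebesgue_measure R).-integrable `[0, 1]
    (EFin \o (fun x => a * cos (c * x) + b * sin (c' * x))).
  exact/lebesgue_integrable01/continuous_cos_sin.
under eq_Rintegral do rewrite trig_sqr_expand.
rewrite Rintegral_sum // => [|k]; last exact: integrable_sumr.
apply: eq_bigr => k _; rewrite Rintegral_sum //.
under eq_bigr do rewrite Rintegral01_cos_sin Rintegral01_cos_2pi_int
  Rintegral01_sin_2pi_int mulr0 addr0.
rewrite (bigD1 k) //= big1 ?addr0 => [|l lk]; first by rewrite subrr eqxx mulr1 !expr2.
have /negbTE lk' : (l != k :> nat) := lk.
by rewrite subr_eq0 (inj_eq (@freq_inj U)) eq_sym lk' mulr0.
Qed.

End TrigPolynomial.

Section CauchySchwarz.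
Variables (R : realFieldType) (n : nat).

Lemma cauchy_schwarz2 (p q r t : 'I_n -> R) :
  (\sum_k (p k * q k + r k * t k)) ^+ 2 <=
  (\sum_k (p k ^+ 2 + r k ^+ 2)) * (\sum_k (q k ^+ 2 + t k ^+ 2)).
Proof.
set X := \sum_k _; set A := \sum_k _; set B := \sum_k _.
have sum_sqr_ge0 (f g : 'I_n -> R) : 0 <= \sum_k (f k ^+ 2 + g k ^+ 2).
  by apply: sumr_ge0 => k _; rewrite addr_ge0 ?sqr_ge0.
have quad_ge0 z : 0 <= A - 2 * z * X + z ^+ 2 * B.
  have -> : A - 2 * z * X + z ^+ 2 * B =
      \sum_k ((p k - z * q k) ^+ 2 + (r k - z * t k) ^+ 2).
    rewrite /A /X /B !mulr_sumr -sumrN -!big_split /=.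
    by apply: eq_bigr => k _; ring.
  exact: sum_sqr_ge0.
have [B0|B_neq0] := eqVneq B 0.
  suff -> : X = 0 by rewrite expr0n /= mulr_ge0 ?sum_sqr_ge0.
  apply/eqP; apply: contraT => X_neq0.
  have := quad_ge0 ((A + 1) / (2 * X)); rewrite B0 mulr0 addr0.
  have -> : 2 * ((A + 1) / (2 * X)) * X = A + 1 by field; rewrite X_neq0.
  lra.
have B_gt0 : 0 < B by rewrite lt_neqAle eq_sym B_neq0 sum_sqr_ge0.
have := quad_ge0 (X / B).
have -> : A - 2 * (X / B) * X + (X / B) ^+ 2 * B = A - X ^+ 2 / B.
  by field.
by rewrite subr_ge0 ler_pdivrMr // mulrC.
Qed.

(* Cauchy-Schwarz for complex sums, [|sum_k z_k w_k|^2 <= sum |z_k|^2 sum |w_k|^2],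
   with [z_k = a_k + i b_k] and [w_k = p_k + i q_k]. *)
Lemma cauchy_schwarz_complex (a b p q : 'I_n -> R) :
  (\sum_k (a k * p k - b k * q k)) ^+ 2 + (\sum_k (b k * p k + a k * q k)) ^+ 2 <=
  (\sum_k (a k ^+ 2 + b k ^+ 2)) * (\sum_k (p k ^+ 2 + q k ^+ 2)).
Proof.
set X := \sum_k _; set Y := \sum_k _; set A := \sum_k _; set B := \sum_k _.
set N := X ^+ 2 + Y ^+ 2.
have N_ge0 : 0 <= N by rewrite addr_ge0 ?sqr_ge0.
have A_ge0 : 0 <= A by apply: sumr_ge0 => k _; rewrite addr_ge0 ?sqr_ge0.
have B_ge0 : 0 <= B by apply: sumr_ge0 => k _; rewrite addr_ge0 ?sqr_ge0.
(* [N = Re (conj(X + iY) * sum_k z_k w_k)], to which the real inequality applies *)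
have NE : N = \sum_k (a k * (X * p k + Y * q k) + b k * (Y * p k - X * q k)).
  transitivity (\sum_k (X * (a k * p k - b k * q k) + Y * (b k * p k + a k * q k))).
    by rewrite /N big_split /= -!mulr_sumr !expr2.
  by apply: eq_bigr => k _; ring.
have := cauchy_schwarz2 a (fun k => X * p k + Y * q k) b (fun k => Y * p k - X * q k).
have -> : \sum_k ((X * p k + Y * q k) ^+ 2 + (Y * p k - X * q k) ^+ 2) = N * B.
  by rewrite /N mulr_sumr; apply: eq_bigr => k _; ring.
rewrite -NE mulrCA => NN_le.
have [N0|N_neq0] := eqVneq N 0; first by rewrite N0 mulr_ge0.
have N_gt0 : 0 < N by rewrite lt_neqAle eq_sym N_neq0.
by rewrite -(ler_pM2l N_gt0) -expr2.
Qed.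

End CauchySchwarz.

Lemma sum_le_powR_weighted (R : realType) (U : nat) (rho : R) (a : nat -> R) :
  0 <= rho -> (forall n, 0 <= a n) ->
  \sum_(1 <= n < U.+1) a n <=
  U%:R `^ rho * \sum_(1 <= n < U.+1) a n * n%:R `^ (- rho).
Proof.
move=> rho0 a0; rewrite mulr_sumr big_nat [leRHS]big_nat.
apply: ler_sum => n /andP[n1 nU]; rewrite powRN mulrCA ler_peMr //.
have n_rho_gt0 : 0 < n%:R `^ rho :> R by rewrite powR_gt0 // ltr0n.
rewrite ler_pdivlMr // mul1r ge0_ler_powR ?nnegrE //.
by rewrite ler_nat -ltnS.
Qed.

Lemma muhat_abs2_ge0 (R : realType) (nu : {measure set R -> \bar R}) xi :
  0 <= muhat_abs2 nu xi.
Proof. by rewrite addr_ge0 ?sqr_ge0. Qed.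

Lemma sum_muhat_abs2_le (R : realType) (nu : {measure set R -> \bar R})
    (U : nat) (rho : R) : (1 <= U)%N -> 0 <= rho ->
  \sum_(k < (2 * U).+1) muhat_abs2 nu (freq U k)%:~R <=
  U%:R `^ rho * (muhat_abs2 nu 0 + \sum_(1 <= n < U.+1)
    (muhat_abs2 nu n%:R + muhat_abs2 nu (- n%:R)) * n%:R `^ (- rho)).
Proof.
move=> U1 rho0.
rewrite (sum_freq _ U (fun u : int => muhat_abs2 nu u%:~R)) /= mulrDr.
apply: lerD.
  rewrite ler_peMl ?muhat_abs2_ge0 //.
  by rewrite -[leLHS](powRr0 U%:R) ler_powR ?ler1n.
under eq_bigr do rewrite intrN -!pmulrn.
by apply: sum_le_powR_weighted => // n; rewrite addr_ge0 ?muhat_abs2_ge0.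
Qed.

Lemma partial_sum_le_nneseries (R : realType) (a : nat -> R) (m N : nat) :
  (forall n, 0 <= a n) -> (\sum_(m <= n <oo) (a n)%:E < +oo)%E ->
  \sum_(m <= n < N) a n <= fine (\sum_(m <= n <oo) (a n)%:E).
Proof.
move=> a0 fin; have S_ge0 : (0 <= \sum_(m <= n <oo) (a n)%:E)%E.
  by apply: nneseries_ge0 => n _ _; rewrite lee_fin.
rewrite -lee_fin fineK ?ge0_fin_numE // -sumEFin.
by apply: nneseries_lim_ge => n _ _; rewrite lee_fin.
Qed.

Lemma sqrt_sum_muhat_abs2_le (R : realType) (nu : {measure set R -> \bar R})
    (rho : R) : 0 <= rho ->
  ((muhat_abs2 nu 0)%:E + \sum_(1 <= n <oo)
    ((muhat_abs2 nu n%:R + muhat_abs2 nu (- n%:R)) * n%:R `^ (- rho))%:E < +oo)%E ->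
  exists K, forall U : nat, (1 <= U)%N ->
    Num.sqrt (\sum_(k < (2 * U).+1) muhat_abs2 nu (freq U k)%:~R) <=
    Num.sqrt K * U%:R `^ rho.
Proof.
move=> rho_ge0 fin.
set a := fun n : nat =>
  (muhat_abs2 nu n%:R + muhat_abs2 nu (- n%:R)) * n%:R `^ (- rho).
have a_ge0 n : 0 <= a n.
  by rewrite /a mulr_ge0 ?powR_ge0 // addr_ge0 ?muhat_abs2_ge0.
have series_fin : (\sum_(1 <= n <oo) (a n)%:E < +oo)%E.
  by apply: le_lt_trans fin; rewrite leeDr ?lee_fin ?muhat_abs2_ge0.
have a_le := partial_sum_le_nneseries _ _ _ _ a_ge0 series_fin.
set K := muhat_abs2 nu 0 + fine (\sum_(1 <= n <oo) (a n)%:E).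
have K_ge0 : 0 <= K.
  by rewrite /K addr_ge0 ?muhat_abs2_ge0 // (le_trans _ (a_le 0)) ?big_geq.
exists K => U U1; set P := U%:R `^ rho.
have P_ge1 : 1 <= P by rewrite -[leLHS](powRr0 U%:R) ler_powR ?ler1n.
rewrite -(ger0_norm (le_trans ler01 P_ge1)) -sqrtr_sqr -sqrtrM // ler_wsqrtr //.
apply: le_trans (sum_muhat_abs2_le _ nu _ _ U1 rho_ge0) _.
rewrite mulrC expr2 mulrA ler_pM2r ?(lt_le_trans ltr01) //.
apply: (@le_trans _ _ K); last by rewrite ler_peMr.
by rewrite lerD2l; exact: a_le.
Qed.

Theorem lemma4p1 (R : realType) (mu : {finite_measure set R -> \bar R})
  (hsupp : mu (~` `[0%R, 1%R]) = 0%E)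
  (hfourier : forall s : R, 0 < s < 1 ->
     ((muhat_abs2 mu 0)%:E +
      \sum_(1 <= n <oo)
        ((muhat_abs2 mu n%:R + muhat_abs2 mu (- n%:R)) * (n%:R `^ (s - 1)))%:E
      < +oo)%E)
  (rho : R) (hrho : 0 < rho < 1) :
  exists C : R, forall (U : nat) (cre cim : int -> R), (1 <= U)%N ->
    trig_int_abs mu U cre cim <= C * (U%:R `^ rho) * trig_L2norm U cre cim.
Proof.
case/andP: hrho => rho_gt0 rho_lt1.
have mu01 : (mu `[0%R, 1%R]%classic < +oo)%E.
  by rewrite -ge0_fin_numE // fin_num_measure.
have s_itv : 0 < 1 - rho < 1 by apply/andP; split; lra.
have := hfourier _ s_itv; rewrite (_ : 1 - rho - 1 = - rho); last by ring.
case/(sqrt_sum_muhat_abs2_le _ _ _ (ltW rho_gt0)) => K muhat_le.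
exists (Num.sqrt K) => U cre cim U1.
rewrite /trig_int_abs /trig_L2norm Rintegral_trig_re // Rintegral_trig_im //.
rewrite trig_parseval.
have := cauchy_schwarz_complex _ _ (fun k : 'I_(2 * U).+1 => cre (freq U k))
  (fun k => cim (freq U k)) (fun k => muhat_re mu (freq U k)%:~R)
  (fun k => muhat_im mu (freq U k)%:~R).
move=> /ler_wsqrtr /le_trans; apply.
rewrite sqrtrM; last by apply: sumr_ge0 => k _; rewrite addr_ge0 ?sqr_ge0.
by rewrite [leRHS]mulrC ler_wpM2l ?sqrtr_ge0 //; exact: muhat_le.
Qed.
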